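(* For all integers $m\ge 0$ and $n\ge 1$, $$\int_0^{\pi/2}x^{2m}\cos^{2n-1}(x)\,dx=\frac{(2m)!}{2}\,\frac{4^n}{n\binom{2n}{n}}\sum_{j=0}^m\frac{(-1)^j\,t_n^{\star}(\{2\}_j)}{(2m-2j)!}\left(\frac{\pi}{2}\right)^{2m-2j}.$$
   Context: For integers $n\ge 1$ and $j\ge 0$, the multiple $t$-harmonic star sum is $$t_n^{\star}(\{2\}_j)=\sum_{n\ge k_1\ge\dots\ge k_j\ge 1}\prod_{i=1}^j\frac{1}{(2k_i-1)^2},$$ with $t_n^{\star}(\{2\}_0)=1$; equivalently $t_n^{\star}(\{2\}_j)=\sum_{k=1}^n \frac{t_k^{\star}(\{2\}_{j-1})}{(2k-1)^2}$ for $j\ge1$. *)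

From Stdlib Require Import Reals Factorial.
From Coquelicot Require Import Coquelicot.
Open Scope R_scope.

Fixpoint sum_1_to (f : nat -> R) (n : nat) : R :=
  match n with
  | O => 0
  | S p => sum_1_to f p + f (S p)
  end.

(* tstar n j = t_n^*({2}_j) = sum_{n >= k_1 >= ... >= k_j >= 1} prod 1/(2k_i-1)^2,
   via the recursion t_n^*({2}_j) = sum_{k=1}^n t_k^*({2}_{j-1}) / (2k-1)^2. *)
Fixpoint tstar (n j : nat) {struct j} : R :=
  match j with
  | O => 1
  | S j' => sum_1_to (fun k => tstar k j' / (2 * INR k - 1) ^ 2) n
  end.

From Stdlib Require Import Reals Lra Lia Factorial.
From Coquelicot Require Import Coquelicot.
Open Scope R_scope.

(* Let I(k, N) be the integral of x^k cos^N x over [0, pi/2].  Differentiating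
   x^k cos^N x sin x and x^(k-1) cos^(N+1) x (integration by parts twice) gives
   (N+1)^2 I(k, N+1) = N (N+1) I(k, N-1) - k (k-1) I(k-2, N+1) + boundary term,
   where the boundary term survives only for N = 0.  For k = 2m, N = 2n this
   recurrence determines I(2m, 2n-1), n >= 1, by induction on n and then m.  The
   claimed closed form obeys the same recurrence: the sum over j through the
   defining recursion of t_n^*, and the prefactor a_n = 4^n / (n C(2n, n))
   through (2n+1) a_(n+1) = 2n a_n. *)

Definition cos_moment (k N : nat) : R := RInt (fun x => x ^ k * cos x ^ N) 0 (PI / 2).

Definition moment_primitive (k N : nat) (x : R) : R :=
  - x ^ k * (INR (N + 1) * cos x ^ N * sin x) - INR k * x ^ (k - 1) * cos x ^ (N + 1).

Lemma pow_pred_mul_sin2 (N : nat) (c s : R) : s ^ 2 = 1 - c ^ 2 ->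
  INR N * c ^ (N - 1) * s ^ 2 = INR N * c ^ (N - 1) - INR N * (c ^ N * c).
Proof. intros hs. rewrite hs. destruct N as [|N]; simpl; [ring|]. rewrite Nat.sub_0_r. ring. Qed.

Lemma is_derive_moment_primitive (k N : nat) (x : R) :
  is_derive (moment_primitive k N) x
    (INR (N + 1) * INR N * (x ^ k * cos x ^ (N - 1))
     - INR (N + 1) ^ 2 * (x ^ k * cos x ^ (N + 1))
     - INR k * INR (k - 1) * (x ^ (k - 2) * cos x ^ (N + 1))).
Proof.
unfold moment_primitive. auto_derive; auto.
rewrite <- !Nat.sub_1_r, Nat.add_sub. replace (k - 1 - 1)%nat with (k - 2)%nat by lia.
rewrite !pow_add, pow_1.
transitivity (x ^ k * INR (N + 1) * (INR N * cos x ^ (N - 1) * sin x ^ 2 - cos x ^ N * cos x)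
  - INR k * INR (k - 1) * (x ^ (k - 2) * (cos x ^ N * cos x))); [ring|].
rewrite pow_pred_mul_sin2, plus_INR; [simpl; ring|].
rewrite <- !Rsqr_pow2. apply sin2.
Qed.

Lemma is_RInt_cos_moment (k N : nat) :
  is_RInt (fun x => x ^ k * cos x ^ N) 0 (PI / 2) (cos_moment k N).
Proof.
apply (RInt_correct (V := R_CompleteNormedModule)), (ex_RInt_continuous (V := R_CompleteNormedModule)).
intros x _. apply (ex_derive_continuous (K := R_AbsRing) (V := R_NormedModule)).
auto_derive; auto.
Qed.

(* For [k <= 1] or [N = 0] the truncated exponents [k - 1], [k - 2], [N - 1]
   only occur with a zero coefficient. *)
Lemma cos_moment_rec (k N : nat) :
  INR (N + 1) * INR N * cos_moment k (N - 1) - INR (N + 1) ^ 2 * cos_moment k (N + 1)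
  - INR k * INR (k - 1) * cos_moment (k - 2) (N + 1)
  = moment_primitive k N (PI / 2) - moment_primitive k N 0.
Proof.
pose proof (is_RInt_minus _ _ _ _ _ _
  (is_RInt_minus _ _ _ _ _ _
     (is_RInt_scal _ _ _ (INR (N + 1) * INR N) _ (is_RInt_cos_moment k (N - 1)))
     (is_RInt_scal _ _ _ (INR (N + 1) ^ 2) _ (is_RInt_cos_moment k (N + 1))))
  (is_RInt_scal _ _ _ (INR k * INR (k - 1)) _ (is_RInt_cos_moment (k - 2) (N + 1))))
  as h_lin.
assert (h_ftc := is_RInt_derive (V := R_CompleteNormedModule) (moment_primitive k N) _ 0 (PI / 2)
  (fun x _ => is_derive_moment_primitive k N x)).
etransitivity; [symmetry; exact (is_RInt_unique _ _ _ _ h_lin)|].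
apply is_RInt_unique, h_ftc.
intros x _. apply (ex_derive_continuous (K := R_AbsRing) (V := R_NormedModule)).
auto_derive; auto.
Qed.

Lemma cos_moment_even_odd_rec (m n : nat) :
  INR (2 * n + 1) ^ 2 * cos_moment (2 * m) (2 * n + 1)
  = INR (2 * n + 1) * INR (2 * n) * cos_moment (2 * m) (2 * n - 1)
    - INR (2 * m) * INR (2 * m - 1) * cos_moment (2 * m - 2) (2 * n + 1)
    + INR (2 * n + 1) * (PI / 2) ^ (2 * m) * 0 ^ (2 * n).
Proof.
pose proof (cos_moment_rec (2 * m) (2 * n)) as h.
unfold moment_primitive in h.
rewrite cos_PI2, sin_PI2, cos_0, sin_0, !pow1, (pow_i (2 * n + 1)) in h by lia.
assert (h0 : INR (2 * m) * 0 ^ (2 * m - 1) = 0).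
{ destruct m as [|m]; [simpl; ring|]. rewrite pow_i by lia. ring. }
lra.
Qed.

(* [0 ^ (2 * n)] is the indicator of [n = 0]. *)
Definition odd_moment_rec (h : nat -> nat -> R) : Prop :=
  forall m n,
    INR (2 * n + 1) ^ 2 * h m (S n)
    = INR (2 * n + 1) * INR (2 * n) * h m n
      - INR (2 * m) * INR (2 * m - 1) * h (m - 1)%nat (S n)
      + INR (2 * n + 1) * (PI / 2) ^ (2 * m) * 0 ^ (2 * n).

(* The values [h m 0] and [h (0 - 1) _] are irrelevant: they only occur with the
   coefficient [INR (2 * n)] at [n = 0], resp. [INR (2 * m)] at [m = 0]. *)
Lemma odd_moment_rec_unique (f g : nat -> nat -> R) :
  odd_moment_rec f -> odd_moment_rec g -> forall m n, f m (S n) = g m (S n).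
Proof.
intros hf hg.
assert (step : forall m n,
  INR (2 * n) * f m n = INR (2 * n) * g m n ->
  INR (2 * m) * INR (2 * m - 1) * f (m - 1)%nat (S n)
  = INR (2 * m) * INR (2 * m - 1) * g (m - 1)%nat (S n) ->
  f m (S n) = g m (S n)).
{ intros m n e_prev_n e_prev_m.
  apply (Rmult_eq_reg_l (INR (2 * n + 1) ^ 2)); [|apply pow_nonzero, not_0_INR; lia].
  rewrite hf, hg, !(Rmult_assoc (INR (2 * n + 1))), e_prev_n, e_prev_m. reflexivity. }
intros m n. revert m.
induction n as [|n IHn]; intros m; induction m as [|m IHm]; apply step;
  try (simpl; ring); try (rewrite IHn; reflexivity).
all: replace (S m - 1)%nat with m by lia; rewrite IHm; reflexivity.
Qed.

Definition odd_cos_moment (m n : nat) : R := cos_moment (2 * m) (2 * n - 1).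

Lemma odd_cos_moment_rec : odd_moment_rec odd_cos_moment.
Proof.
intros m n. unfold odd_cos_moment.
replace (2 * S n - 1)%nat with (2 * n + 1)%nat by lia.
replace (2 * (m - 1))%nat with (2 * m - 2)%nat by lia.
apply cos_moment_even_odd_rec.
Qed.

Definition tstar_poly (m n : nat) : R :=
  sum_f_R0 (fun j => (-1) ^ j * tstar n j / INR (fact (2 * m - 2 * j)) * (PI / 2) ^ (2 * m - 2 * j)) m.

Lemma tstar_succ (n j : nat) : tstar (S n) (S j) = tstar n (S j) + tstar (S n) j / INR (2 * n + 1) ^ 2.
Proof.
replace (INR (2 * n + 1)) with (2 * INR (S n) - 1) by (rewrite plus_INR, mult_INR, S_INR; simpl; ring).
reflexivity.
Qed.

Lemma tstar_poly_0_l (n : nat) : tstar_poly 0 n = 1.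
Proof. unfold tstar_poly. simpl. field. Qed.

Lemma tstar_poly_0_r (m : nat) : tstar_poly m 0 = (PI / 2) ^ (2 * m) / INR (fact (2 * m)).
Proof.
unfold tstar_poly. destruct m as [|m]; [simpl; field|].
rewrite decomp_sum by lia. rewrite sum_eq_R0.
- rewrite Nat.sub_0_r. simpl tstar. field. apply INR_fact_neq_0.
- intros i _. simpl tstar. unfold Rdiv. ring.
Qed.

Lemma tstar_poly_rec (m n : nat) :
  tstar_poly (S m) (S n) = tstar_poly (S m) n - tstar_poly m (S n) / INR (2 * n + 1) ^ 2.
Proof.
unfold tstar_poly. rewrite !(decomp_sum _ (S m)) by lia. simpl pred.
rewrite (sum_eq _ (fun i => (-1) ^ S i * tstar n (S i) / INR (fact (2 * S m - 2 * S i)) * (PI / 2) ^ (2 * S m - 2 * S i)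
   - ((-1) ^ i * tstar (S n) i / INR (fact (2 * m - 2 * i)) * (PI / 2) ^ (2 * m - 2 * i)) * / INR (2 * n + 1) ^ 2)).
- rewrite minus_sum, <- scal_sum. simpl tstar. unfold Rdiv. ring.
- intros i _. replace (2 * S m - 2 * S i)%nat with (2 * m - 2 * i)%nat by lia.
  rewrite tstar_succ. cbn [pow]. field. split.
  + apply not_0_INR. lia.
  + apply INR_fact_neq_0.
Qed.

Definition wallis_coef (n : nat) : R := 4 ^ n / (INR n * Binomial.C (2 * n) n).

Lemma wallis_coef_succ (n : nat) :
  wallis_coef (S n) = 4 ^ S n * INR (fact n) * INR (fact (S n)) / INR (fact (2 * S n)).
Proof.
unfold wallis_coef, Binomial.C. replace (2 * S n - S n)%nat with (S n) by lia.
rewrite (fact_simpl n), mult_INR.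
pose proof (INR_fact_neq_0 n). pose proof (INR_fact_neq_0 (2 * S n)).
pose proof (not_0_INR (S n) ltac:(lia)).
field. auto.
Qed.

(* [wallis_coef 0] is a division by zero; the last term makes the identity read
   [wallis_coef 1 = 2] at [n = 0]. *)
Lemma wallis_coef_rec (n : nat) :
  INR (2 * n + 1) * wallis_coef (S n) = INR (2 * n) * wallis_coef n + 2 * 0 ^ (2 * n).
Proof.
destruct n as [|n].
- rewrite wallis_coef_succ. simpl. field.
- rewrite !wallis_coef_succ, pow_i by lia.
  replace (2 * S (S n))%nat with (S (S (2 * S n))) by lia.
  rewrite (fact_simpl (S (2 * S n))), (fact_simpl (2 * S n)), (fact_simpl (S n)), (fact_simpl n), !mult_INR.
  pose proof (INR_fact_neq_0 n). pose proof (INR_fact_neq_0 (2 * S n)).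
  rewrite !S_INR, !plus_INR, !mult_INR, !S_INR, INR_0.
  pose proof (pos_INR n).
  cbn [pow]. field. repeat split; (assumption || lra).
Qed.

Definition moment_closed_form (m n : nat) : R :=
  INR (fact (2 * m)) / 2 * wallis_coef n * tstar_poly m n.

Lemma moment_closed_form_rec : odd_moment_rec moment_closed_form.
Proof.
intros m n. unfold moment_closed_form.
assert (hW : wallis_coef (S n) = (INR (2 * n) * wallis_coef n + 2 * 0 ^ (2 * n)) / INR (2 * n + 1)).
{ rewrite <- wallis_coef_rec. field. apply not_0_INR. lia. }
destruct m as [|m].
- rewrite !tstar_poly_0_l, hW. simpl. field. apply not_0_INR. lia.
- assert (h_fact : INR (fact (2 * S m)) = INR (2 * S m) * INR (2 * S m - 1) * INR (fact (2 * m))).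
  { replace (2 * S m - 1)%nat with (S (2 * m)) by lia.
    replace (2 * S m)%nat with (S (S (2 * m))) by lia.
    rewrite (fact_simpl (S _)), (fact_simpl (2 * m)), !mult_INR. ring. }
  assert (h_bdry : INR (2 * n + 1) * (PI / 2) ^ (2 * S m) * 0 ^ (2 * n)
                   = INR (2 * n + 1) * INR (fact (2 * S m)) * tstar_poly (S m) n * 0 ^ (2 * n)).
  { destruct n as [|n].
    - rewrite tstar_poly_0_r. field. apply INR_fact_neq_0.
    - rewrite pow_i by lia. ring. }
  rewrite h_bdry, tstar_poly_rec, hW, h_fact, Nat.sub_succ, Nat.sub_0_r.
  field. apply not_0_INR. lia.
Qed.

Theorem lemma3 (m n : nat) (hn : (1 <= n)%nat) :
  RInt (fun x => x ^ (2 * m) * cos x ^ (2 * n - 1)) 0 (PI / 2) =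
  INR (fact (2 * m)) / 2 * (4 ^ n / (INR n * Binomial.C (2 * n) n)) *
  sum_f_R0 (fun j => (-1) ^ j * tstar n j / INR (fact (2 * m - 2 * j))
                       * (PI / 2) ^ (2 * m - 2 * j)) m.
Proof.
destruct n as [|n]; [lia|].
exact (odd_moment_rec_unique _ _ odd_cos_moment_rec moment_closed_form_rec m n).
Qed.
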